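(* Let $n\ge5$ be odd and $M$ an $n\times n$ HW-matrix. There is no spin$^c$ set $S$ for $M$ with $|S|=n-1$.
   Context: $\mathcal S=\{0,1,2,3\}$ is the Klein four-group ($\mathbb Z_2$-vector space) with $x+x=0$, $1+2=3$, $1+3=2$, $2+3=1$. $\mathcal P_n$ is the power set of $\{1,\dots,n\}$ (addition = symmetric difference, product = intersection); $|U|_2=|U|\bmod 2$; $J_M(U)=\{j:\sum_{i\in U}M_{ij}=1\}$. $M$ is an HW-matrix if it has $1$ on the diagonal and $2$ or $3$ off the diagonal, all column sums are $0$, and $J_M(U)\ne\emptyset$ for all $U\ne\emptyset,\{1,\dots,n\}$. $S\in\mathcal P_n$ is a spin$^c$ set for $M$ if $|(J_M(U)+U)\cap S|_2=\binom{|U|}2\bmod 2$ for all $U\in\mathcal P_n$. *)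

From mathcomp Require Import all_boot all_algebra.
Set Implicit Arguments. Unset Strict Implicit. Unset Printing Implicit Defensive.

(* The Klein four-group S = {0,1,2,3}, encoded as the Z_2-vector space
   bool * bool:  0 = (false,false), 1 = (true,false), 2 = (false,true),
   3 = (true,true); addition is componentwise xor, so 1+2=3 etc. *)
Definition klein := (bool * bool)%type.
Definition k0 : klein := (false, false).
Definition k1 : klein := (true, false).
Definition k2 : klein := (false, true).
Definition k3 : klein := (true, true).
Definition kadd (x y : klein) : klein := (x.1 (+) y.1, x.2 (+) y.2).

Definition ksum n (M : 'M[klein]_n) (U : {set 'I_n}) (j : 'I_n) : klein :=
  \big[kadd/k0]_(i in U) M i j.

Definition JM n (M : 'M[klein]_n) (U : {set 'I_n}) : {set 'I_n} :=
  [set j | ksum M U j == k1].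

Definition symdiff n (A B : {set 'I_n}) : {set 'I_n} := (A :\: B) :|: (B :\: A).

Definition HW_matrix n (M : 'M[klein]_n) : Prop :=
  [/\ (forall i, M i i = k1),
      (forall i j, i != j -> M i j = k2 \/ M i j = k3),
      (forall j, ksum M [set: 'I_n] j = k0) &
      (forall U : {set 'I_n}, U != set0 -> U != [set: 'I_n] -> JM M U != set0)].

Definition spinc_set n (M : 'M[klein]_n) (S : {set 'I_n}) : Prop :=
  forall U : {set 'I_n},
    odd #|symdiff (JM M U) U :&: S| = odd 'C(#|U|, 2).

From mathcomp Require Import all_boot all_algebra zify.
Set Implicit Arguments. Unset Strict Implicit. Unset Printing Implicit Defensive.

(* Let M be an n x n HW-matrix, n odd, and write f(i,j) in {0,1} for the first
   coordinate of M_ij in S = Z_2 x Z_2 (so f(i,i) = 1, and off the diagonal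
   f distinguishes 3 from 2); the second coordinate of M_ij is [i != j].  Then
   j lies in J_M(U) iff sum_{i in U} f(i,j) = 1 and [j in U] = |U| mod 2.

   Suppose S = {1..n} \ {k} were a spin^c set.  The spin^c condition for the
   two-element sets {i,l} yields parity relations which, combined for the
   pairs {k,i}, {k,l}, {i,l}, say that t(i,l) := f(i,l) + f(k,l) defines a
   tournament on the vertices i != k.  The column sums of M vanish and n is
   odd, so every vertex of this tournament has odd, hence positive, in-degree.
   A tournament in which every vertex has an in-neighbour contains a directed
   3-cycle a <- u <- v <- a; for U = {a,u,v} each column of U then sums to
   1 + 1 = 0, so J_M(U) is empty although U is neither empty nor everything,
   contradicting the HW property. *)

Section ParitySums.
Variable T : finType.
Implicit Types (P Q : pred T) (F : T -> bool).

Lemma odd_card_sep P Q :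
  odd #|[set i | P i && Q i]| = \big[addb/false]_(i | P i) Q i.
Proof.
rewrite -sum1_card (big_morph odd oddD (id1 := false) (erefl (odd 0))).
rewrite big_mkcond [RHS]big_mkcond /=; apply: eq_bigr => i _.
by rewrite inE; case: (P i); case: (Q i).
Qed.

Lemma parity_sum_const P c :
  \big[addb/false]_(i | P i) c = odd #|[set i | P i]| && c.
Proof.
case: c; last by rewrite andbF big1.
rewrite andbT -odd_card_sep; congr (odd #|pred_of_set _|).
by apply/setP => i; rewrite !inE andbT.
Qed.

Lemma parity_sum_delta P i c :
  \big[addb/false]_(j | P j) ((j == i) && c) = P i && c.
Proof.
have [Pi | nPi] := boolP (P i).
  by rewrite (bigD1 i) //= eqxx big1 ?addbF // => j /andP[_ /negbTE ->].
by rewrite big1 // => j Pj; case: eqP => // ji; rewrite -ji Pj in nPi.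
Qed.

Lemma parity_sum2 F a u : a != u ->
  \big[addb/false]_(i in [set a; u]) F i = F a (+) F u.
Proof. by move=> au; rewrite big_setU1 ?big_set1 // inE. Qed.

Lemma parity_sum3 F a u v : a != u -> u != v -> v != a ->
  \big[addb/false]_(i in [set a; u; v]) F i = F a (+) F u (+) F v.
Proof.
move=> au uv va; have a_uv : a \notin [set u; v] by rewrite !inE negb_or au eq_sym va.
by rewrite -setUA big_setU1 // parity_sum2 //= addbA.
Qed.

End ParitySums.

(* A tournament on the vertex set V: between two distinct vertices exactly one
   of t i l, t l i holds (t i l reads "i beats l"). *)
Section Tournament.
Variables (T : finType) (V : pred T) (t : rel T).

Definition in_nbhd x := [set i | [&& V i, i != x & t i x]].

Hypothesis t_tournament : {in V &, forall i l, i != l -> t i l (+) t l i}.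

Lemma tournament_asym i l : V i -> V l -> i != l -> t i l -> ~~ t l i.
Proof. by move=> Vi Vl il til; move: (t_tournament Vi Vl il); rewrite til. Qed.

(* Take a of minimal in-degree and u beating a; since u is
   in the in-neighbourhood of a but not in its own, minimality forces some v
   beating u but not a, so a beats v. *)
Lemma tournament_3cycle x0 : V x0 -> (forall x, V x -> 0 < #|in_nbhd x|) ->
  exists a u v, [/\ [&& V a, V u & V v], [&& a != u, u != v & v != a]
                  & [&& t u a, t v u & t a v]].
Proof.
move=> Vx0 in_gt0.
have [a Va min_a] := arg_minnP (fun y => #|in_nbhd y|) Vx0.
have /card_gt0P[u] := in_gt0 a Va; rewrite inE => /and3P[Vu ua tua].
have [sub | /subsetPn[v]] := boolP (in_nbhd u \subset in_nbhd a).
  have : in_nbhd u \proper in_nbhd a.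
    rewrite properE sub /=; apply/subsetPn; exists u; first by rewrite inE Vu ua tua.
    by rewrite inE eqxx andbF.
  by move/proper_card; rewrite ltnNge min_a.
rewrite !inE => /and3P[Vv vu tvu]; rewrite Vv /= => not_tva.
have va : v != a.
  by apply: contraTneq tvu => ->; apply: tournament_asym; rewrite // eq_sym.
have tav : t a v.
  move: not_tva (t_tournament Va Vv); rewrite va /= => /negbTE ->.
  by rewrite eq_sym va addbF => /(_ isT).
exists a, u, v; split; first by rewrite Va Vu Vv.
  by rewrite eq_sym ua eq_sym vu va.
by rewrite tua tvu tav.
Qed.
End Tournament.

Lemma in_symdiff n (A B : {set 'I_n}) x :
  (x \in symdiff A B) = (x \in A) (+) (x \in B).
Proof. by rewrite !inE; case: (x \in A); case: (x \in B). Qed.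

Lemma ksumE n (M : 'M[klein]_n) U j :
  ksum M U j = (\big[addb/false]_(i in U) (M i j).1,
                \big[addb/false]_(i in U) (M i j).2).
Proof.
rewrite [LHS]surjective_pairing /ksum.
have fstD (x y : klein) : (kadd x y).1 = x.1 (+) y.1 by [].
have sndD (x y : klein) : (kadd x y).2 = x.2 (+) y.2 by [].
by rewrite (big_morph fst fstD (erefl k0.1)) (big_morph snd sndD (erefl k0.2)).
Qed.

Section HWMatrix.
Variables (n : nat) (M : 'M[klein]_n).
Hypothesis M_HW : HW_matrix M.

Definition hw_bit (i j : 'I_n) : bool := (M i j).1.

Lemma hw_bit_diag i : hw_bit i i.
Proof. by case: M_HW => diag _ _ _; rewrite /hw_bit diag. Qed.

Lemma hw_snd i j : (M i j).2 = (i != j).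
Proof.
case: M_HW => diag offdiag _ _; have [-> | ij] := eqVneq i j; first by rewrite diag.
by case: (offdiag i j ij) => ->.
Qed.

Lemma hw_colsum j : \big[addb/false]_i hw_bit i j = false.
Proof.
case: M_HW => _ _ colsum _; have /(congr1 fst) := colsum j.
rewrite ksumE /= => col1; rewrite -[RHS]col1.
by apply: eq_bigl => i; rewrite in_setT.
Qed.

(* J_M(U) for an HW-matrix: the second coordinate of the column sum over U is
   |U \ {j}| mod 2, so j must lie in U exactly when |U| is odd. *)
Lemma JM_HW U j :
  (j \in JM M U) = (j \in U == odd #|U|) && \big[addb/false]_(i in U) hw_bit i j.
Proof.
have snd_sum : \big[addb/false]_(i in U) (M i j).2 = odd #|U| (+) (j \in U).
  rewrite (eq_bigr (fun i => true (+) ((i == j) && true))); last first.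
    by move=> i _; rewrite hw_snd andbT.
  by rewrite big_split /= parity_sum_const parity_sum_delta cardsE !andbT.
rewrite inE ksumE snd_sum /hw_bit xpair_eqE eqb_id -negb_add.
by case: (j \in U); case: (odd #|U|); case: (\big[addb/false]_(i in U) _).
Qed.

(* If in the triangle {a,u,v} each vertex receives f = 1 from exactly one of
   the other two, each column sum over the triangle is 1 + 1 = 0, hence
   J_M({a,u,v}) is empty. *)
Lemma JM_triangle a u v : a != u -> u != v -> v != a ->
  hw_bit u a (+) hw_bit v a -> hw_bit v u (+) hw_bit a u -> hw_bit a v (+) hw_bit u v ->
  JM M [set a; u; v] = set0.
Proof.
move=> au uv va ea eu ev.
have card3 : #|[set a; u; v]| = 3.
  by rewrite -setUA cardsU1 cards2 uv !inE negb_or au eq_sym va.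
apply/setP => j; rewrite JM_HW card3 parity_sum3 // !inE.
have [-> | ja] := eqVneq j a.
  by move: ea; rewrite eqxx hw_bit_diag; case: (hw_bit u a); case: (hw_bit v a).
have [-> | ju] := eqVneq j u.
  by move: eu; rewrite eqxx hw_bit_diag /=; case: (hw_bit v u); case: (hw_bit a u).
have [-> | jv] := eqVneq j v.
  by move: ev; rewrite eqxx hw_bit_diag /=; case: (hw_bit a v); case: (hw_bit u v).
by [].
Qed.

Section PointComplement.
Variable k : 'I_n.
Hypothesis spinc_k : spinc_set M (~: [set k]).

Let row_parity i := \big[addb/false]_(j | j != k) hw_bit i j.

(* The spin^c condition for U = {i,l}: as |U| is even, J_M(U) is the set of
   j outside U with f(i,j) + f(l,j) = 1, and |(J_M(U) + U) \ {k}| is odd. *)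
Lemma spinc_pair i l : i != l ->
  row_parity i (+) row_parity l (+) ((i != k) && hw_bit l i) (+) ((l != k) && hw_bit i l).
Proof.
move=> il; have := spinc_k [set i; l]; rewrite cards2 il /=.
have -> : symdiff (JM M [set i; l]) [set i; l] :&: ~: [set k] =
    [set j | (j != k) && ((j \in JM M [set i; l]) (+) (j \in [set i; l]))].
  by apply/setP => j; rewrite in_setI in_setC in_set1 in_symdiff [RHS]inE andbC.
rewrite odd_card_sep (eq_bigr (fun j => hw_bit i j (+) hw_bit l j
    (+) ((j == i) && hw_bit l i) (+) ((j == l) && hw_bit i l))); last first.
  move=> j _; rewrite JM_HW cards2 il parity_sum2 // !inE.
  have [-> | ji] := eqVneq j i.
    by rewrite (negbTE il) hw_bit_diag /=; case: (hw_bit l i).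
  have [-> | jl] := eqVneq j l; first by rewrite hw_bit_diag /=; case: (hw_bit i l).
  by case: (hw_bit i j); case: (hw_bit l j).
by rewrite !big_split /= !parity_sum_delta.
Qed.

Definition hw_tour i l := hw_bit i l (+) hw_bit k l.

(* Adding the pair relations for {k,i}, {k,l} and {i,l}, the row parities
   cancel and exactly one of hw_tour i l, hw_tour l i remains. *)
Lemma hw_tour_tournament :
  {in [pred i | i != k] &, forall i l, i != l -> hw_tour i l (+) hw_tour l i}.
Proof.
move=> i l /[!inE] ik lk il.
have := spinc_pair ik; have := spinc_pair lk; have := spinc_pair il.
rewrite ik lk eqxx /= /hw_tour.
by case: (row_parity k); case: (row_parity i); case: (row_parity l);
  case: (hw_bit i l); case: (hw_bit l i); case: (hw_bit k i); case: (hw_bit k l).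
Qed.

(* Every in-degree is odd: the column sum of f at x vanishes, f(x,x) = 1, and
   the n - 2 (an odd number) summands f(k,x) cancel all but one copy. *)
Lemma hw_tour_in_odd x : odd n -> x != k ->
  odd #|in_nbhd [pred i | i != k] hw_tour x|.
Proof.
move=> n_odd xk.
have others_card : #|[set i | (i != k) && (i != x)]| = n - 2.
  have -> : [set i | (i != k) && (i != x)] = ~: [set k; x].
    by apply/setP => i; rewrite !inE negb_or.
  by rewrite cardsCs setCK cards2 eq_sym xk card_ord.
have n_ge2 : 2 <= n.
  by rewrite -[n]card_ord (leq_trans _ (max_card [set k; x])) // cards2 eq_sym xk.
have -> : in_nbhd [pred i | i != k] hw_tour x =
    [set i | ((i != k) && (i != x)) && hw_tour i x].
  by apply/setP => i; rewrite !inE andbA.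
rewrite odd_card_sep big_split /= parity_sum_const others_card oddB // n_odd /=.
have := hw_colsum x; rewrite (bigD1 k) // (bigD1 x) //= hw_bit_diag.
by case: (hw_bit k x); case: (\big[addb/false]_(i | _) _).
Qed.

(* A directed 3-cycle of the tournament is a triangle as in JM_triangle,
   since hw_tour and f differ by a term depending only on the column. *)
Lemma hw_tour_3cycle_JM a u v :
  [&& a != k, u != k & v != k] -> [&& a != u, u != v & v != a] ->
  [&& hw_tour u a, hw_tour v u & hw_tour a v] -> JM M [set a; u; v] = set0.
Proof.
move=> /and3P[ak uk vk] /and3P[au uv va] /and3P[tua tvu tav].
have [ua vu av] : [/\ u != a, v != u & a != v] by split; rewrite eq_sym.
have asym := tournament_asym hw_tour_tournament.
have /negbTE tva := asym a v ak vk av tav.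
have /negbTE tau := asym u a uk ak ua tua.
have /negbTE tuv := asym v u vk uk vu tvu.
have bit_diff x y z : hw_bit x z (+) hw_bit y z = hw_tour x z (+) hw_tour y z.
  by rewrite /hw_tour addbACA addbb addbF.
by apply: JM_triangle; rewrite // bit_diff ?tua ?tva ?tvu ?tau ?tav ?tuv.
Qed.
End PointComplement.
End HWMatrix.

Theorem mainTheorem16 (n : nat) (M : 'M[klein]_n) :
  5 <= n -> odd n -> HW_matrix M ->
  ~ exists S : {set 'I_n}, spinc_set M S /\ #|S| = n.-1.
Proof.
move=> n_ge5 n_odd M_HW [S [spinc_S card_S]].
have [k S_def] : exists k, S = ~: [set k].
  have /cards1P[k Sk] : #|~: S| == 1 by rewrite cardsCs setCK card_S card_ord; lia.
  by exists k; rewrite -Sk setCK.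
subst S.
have [x0 x0k] : exists x0, x0 != k.
  have /card_gt0P[x0] : 0 < #|~: [set k]| by rewrite card_S; lia.
  by rewrite !inE; exists x0.
have [a [u [v [V3 D3 C3]]]] := tournament_3cycle (hw_tour_tournament M_HW spinc_S) x0k
  (fun x xk => odd_gt0 (hw_tour_in_odd M_HW n_odd xk)).
have U_nonempty : [set a; u; v] != set0 by apply/set0Pn; exists a; rewrite !inE eqxx.
have U_proper : [set a; u; v] != setT.
  apply/negP => /eqP/setP/(_ k); rewrite !inE.
  by case/and3P: V3 => ak uk vk; rewrite !(eq_sym k) (negbTE ak) (negbTE uk) (negbTE vk).
have JM_empty := hw_tour_3cycle_JM M_HW spinc_S V3 D3 C3.
by case: M_HW => _ _ _ /(_ _ U_nonempty U_proper); rewrite JM_empty eqxx.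
Qed.
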